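(* Let $\mathcal{G}=(V,L)$ be a finite connected undirected graph with monitor set $M$ and non-monitor set $N=V\setminus M$, $\sigma=|N|$, and let $P$ be a given set of measurement paths between monitors (Uncontrollable Probing). For $1\le k\le\sigma-1$ let $S^{\mathrm{outer}}(k):=\{v\in N:\mathrm{MSC}(v)\ge k\}$ and $S^{\mathrm{inner}}(k):=\{v\in N:\mathrm{MSC}(v)\ge k+1\}$, and let $S^*_{\mathrm{UP}}(k)$ be the maximum-cardinality $k$-identifiable subset of $N$. Then $S^{\mathrm{inner}}(k)\subseteq S^*_{\mathrm{UP}}(k)\subseteq S^{\mathrm{outer}}(k)$.
   Context: A failure set is any $F\subseteq N$; a path fails iff it traverses a node of $F$. $P_F$ is the set of paths in $P$ traversing a node of $F$; $F_1,F_2$ distinguishable iff $P_{F_1}\ne P_{F_2}$. $S\subseteq N$ is $k$-identifiable if any two failure sets $F_1,F_2$ with $|F_1|,|F_2|\le k$ and $F_1\cap S\ne F_2\cap S$ are distinguishable; the maximum-cardinality $k$-identifiable subset of $N$ is unique. For $v\in N$, $P_v$ is the set of paths in $P$ traversing $v$. $\mathrm{MSC}(v)$ is the minimum cardinality of a set $V'\subseteq N\setminus\{v\}$ with $P_v\subseteq\bigcup_{w\in V'}P_w$; if no such $V'$ exists (e.g. when $v$ lies on a two-hop measurement path monitor–$v$–monitor), $\mathrm{MSC}(v):=\sigma$. *)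

From mathcomp Require Import all_boot.
Set Implicit Arguments. Unset Strict Implicit. Unset Printing Implicit Defensive.

Definition undirected_graph (V : finType) (e : rel V) : Prop :=
  symmetric e /\ irreflexive e.

Definition connected_graph (V : finType) (e : rel V) : Prop :=
  forall x y : V, connect e x y.

Definition nonmon (V : finType) (M : {set V}) : {set V} := ~: M.

Definition measurement_path (V : finType) (e : rel V) (M : {set V})
  (p : seq V) : Prop :=
  exists x q, p = x :: q /\ path e x q /\ uniq p /\
    x \in M /\ last x q \in M /\ last x q != x.

(* P_F: the paths of P traversing a node of F (order inherited from P). *)
Definition paths_through (V : finType) (P : seq (seq V)) (F : {set V}) :
  seq (seq V) := [seq p <- P | has (fun x => x \in F) p].

Definition distinguishable (V : finType) (P : seq (seq V)) (F1 F2 : {set V}) :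
  Prop := paths_through P F1 <> paths_through P F2.

Definition k_identifiable (V : finType) (M : {set V}) (P : seq (seq V))
  (k : nat) (S : {set V}) : Prop :=
  forall F1 F2 : {set V},
    F1 \subset nonmon M -> F2 \subset nonmon M ->
    #|F1| <= k -> #|F2| <= k ->
    F1 :&: S != F2 :&: S -> distinguishable P F1 F2.

Definition max_k_identifiable (V : finType) (M : {set V}) (P : seq (seq V))
  (k : nat) (S : {set V}) : Prop :=
  S \subset nonmon M /\ k_identifiable M P k S /\
  forall S' : {set V}, S' \subset nonmon M -> k_identifiable M P k S' ->
    #|S'| <= #|S|.

Definition msc_cover (V : finType) (M : {set V}) (P : seq (seq V))
  (v : V) (V' : {set V}) : bool :=
  (V' \subset nonmon M :\ v) &&
  all (fun p => (v \in p) ==> has (fun w => w \in V') p) P.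

(* MSC(v): minimum cardinality of a cover, or sigma = |N| if none exists
   (every cover has size <= sigma - 1 < sigma, so this is the minimum). *)
Definition MSC (V : finType) (M : {set V}) (P : seq (seq V)) (v : V) : nat :=
  \big[minn/#|nonmon M|]_(V' : {set V} | msc_cover M P v V') #|V'|.

Definition S_outer (V : finType) (M : {set V}) (P : seq (seq V)) (k : nat)
  : {set V} := [set v in nonmon M | k <= MSC M P v].

Definition S_inner (V : finType) (M : {set V}) (P : seq (seq V)) (k : nat)
  : {set V} := [set v in nonmon M | k.+1 <= MSC M P v].

From mathcomp Require Import all_boot.

Set Implicit Arguments.
Unset Strict Implicit.
Unset Printing Implicit Defensive.

(* If failure sets F1 and F2 fail the same paths while v lies in F1 but not
   in F2, then F2 covers every path through v, so MSC(v) <= |F2|.  Hence a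
   node with MSC(v) > k can be added to any k-identifiable set, and maximality
   puts every such node into S.  Conversely a minimum cover V' of a node v
   with MSC(v) < k yields the indistinguishable failure sets v |: V' and V',
   which differ exactly at v; so v cannot lie in a k-identifiable set. *)

Section MinimumSetCover.

Variables (V : finType) (M : {set V}) (P : seq (seq V)).

Lemma MSC_le_cover v (V' : {set V}) : msc_cover M P v V' -> MSC M P v <= #|V'|.
Proof.
move=> cov; rewrite /MSC.
elim: (index_enum _) (mem_index_enum V') => // W s IH; rewrite big_cons inE.
case/orP => [/eqP <-|/IH le_V']; first by rewrite cov geq_minl.
by case: ifP => // _; apply: leq_trans (geq_minr _ _) le_V'.
Qed.

Lemma MSC_cover_witness v :
  MSC M P v < #|nonmon M| ->
  exists2 V', msc_cover M P v V' & #|V'| = MSC M P v.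
Proof.
rewrite /MSC; elim/big_rec: _ => [|V' m cov IH]; first by rewrite ltnn.
by rewrite /minn; case: (ltnP #|V'| m) => [_ _|_ /IH]; first exists V'.
Qed.

Lemma msc_cover_subset v (V' : {set V}) :
  msc_cover M P v V' -> V' \subset nonmon M.
Proof. by case/andP=> /subset_trans -> //; apply/subsetP=> x /setD1P[]. Qed.

Lemma msc_cover_notin v (V' : {set V}) : msc_cover M P v V' -> v \notin V'.
Proof.
by case/andP=> /subsetP sub_V' _; apply/negP=> /sub_V'; rewrite setD11.
Qed.

Lemma msc_cover_paths_through_eq (F1 F2 : {set V}) v :
  v \in nonmon M -> F2 \subset nonmon M -> v \in F1 -> v \notin F2 ->
  paths_through P F1 = paths_through P F2 -> msc_cover M P v F2.
Proof.
move=> vN F2N vF1 vF2 eqP12; apply/andP; split.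
  apply/subsetP=> x xF2; rewrite in_setD1 (subsetP F2N x xF2) andbT.
  by apply: contraNneq vF2 => <-.
apply/allP=> p pP; apply/implyP=> vp.
have : p \in paths_through P F1.
  by rewrite mem_filter pP andbT; apply/hasP; exists v.
by rewrite eqP12 mem_filter => /andP[].
Qed.

Lemma paths_through_setU1_cover v (V' : {set V}) :
  msc_cover M P v V' -> paths_through P (v |: V') = paths_through P V'.
Proof.
case/andP=> _ /allP covP; apply: eq_in_filter => p pP.
apply/hasP/hasP => [[x xp /setU1P[xv|xV']]|[x xp xV']].
- by have := covP p pP; rewrite -xv xp => /hasP.
- by exists x.
- by exists x; rewrite ?setU1r.
Qed.

End MinimumSetCover.

Section Identifiability.

Variables (V : finType) (M : {set V}) (P : seq (seq V)) (k : nat).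

Lemma separated_distinguishable v (F1 F2 : {set V}) :
  v \in nonmon M -> k < MSC M P v -> F2 \subset nonmon M -> #|F2| <= k ->
  v \in F1 -> v \notin F2 -> distinguishable P F1 F2.
Proof.
move=> vN lt_k_MSC F2N F2k vF1 vF2 eqP12.
have le_MSC := MSC_le_cover (msc_cover_paths_through_eq vN F2N vF1 vF2 eqP12).
by have := leq_trans lt_k_MSC (leq_trans le_MSC F2k); rewrite ltnn.
Qed.

Lemma k_identifiable_setU1 v (S : {set V}) :
  v \in nonmon M -> k < MSC M P v ->
  k_identifiable M P k S -> k_identifiable M P k (v |: S).
Proof.
move=> vN lt_k_MSC idS F1 F2 F1N F2N F1k F2k neq_vS.
have [eqS|neqS] := eqVneq (F1 :&: S) (F2 :&: S); last exact: idS.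
have : (v \in F1) != (v \in F2).
  apply: contra neq_vS => /eqP eq_v; apply/eqP/setP=> x.
  move/setP: eqS => /(_ x); rewrite !inE.
  by case: (eqVneq x v) => [->|_] /=; rewrite ?andbT.
have [vF1|vF1] := boolP (v \in F1); have [vF2|vF2] := boolP (v \in F2) => //= _.
- exact: (separated_distinguishable vN lt_k_MSC F2N F2k vF1 vF2).
- exact: nesym (separated_distinguishable vN lt_k_MSC F1N F1k vF2 vF1).
Qed.

Lemma k_identifiable_MSC_ge v (S : {set V}) :
  k <= #|nonmon M| -> v \in S -> v \in nonmon M ->
  k_identifiable M P k S -> k <= MSC M P v.
Proof.
move=> kN vS vN idS; rewrite leqNgt; apply/negP=> lt_MSC_k.
have [V' cov cardV'] := MSC_cover_witness (leq_trans lt_MSC_k kN).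
have vV' := msc_cover_notin cov; have V'N := msc_cover_subset cov.
apply: (idS (v |: V') V') (paths_through_setU1_cover cov) => //.
- by rewrite subUset sub1set vN V'N.
- by rewrite cardsU1 vV' cardV'.
- by rewrite cardV' ltnW.
- by apply/negP=> /eqP/setP/(_ v); rewrite !inE eqxx vS (negbTE vV').
Qed.

Lemma max_k_identifiable_mem v (S : {set V}) :
  max_k_identifiable M P k S -> v \in nonmon M ->
  k_identifiable M P k (v |: S) -> v \in S.
Proof.
case=> SN [_ maxS] vN idvS.
have vSN : v |: S \subset nonmon M by rewrite subUset sub1set vN SN.
by have := maxS _ vSN idvS; rewrite cardsU1; case: (v \in S); rewrite ?ltnn.
Qed.

End Identifiability.

Theorem corollary7 (V : finType) (e : rel V) (M : {set V})
  (P : seq (seq V)) (k : nat) (S : {set V}) :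
  undirected_graph e -> connected_graph e ->
  uniq P -> (forall p, p \in P -> measurement_path e M p) ->
  1 <= k -> k <= #|nonmon M| - 1 ->
  max_k_identifiable M P k S ->
  S_inner M P k \subset S /\ S \subset S_outer M P k.
Proof.
move=> _ _ _ _ _ kN maxS; have [SN [idS _]] := maxS.
split; apply/subsetP=> v.
- rewrite inE => /andP[vN lt_k_MSC].
  exact: max_k_identifiable_mem maxS vN (k_identifiable_setU1 vN lt_k_MSC idS).
- move=> vS; have vN := subsetP SN v vS.
  have kN' : k <= #|nonmon M| := leq_trans kN (leq_subr _ _).
  by rewrite inE vN (k_identifiable_MSC_ge kN' vS vN idS).
Qed.
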